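(* Using the notation below, the maximum of $s_XT+s_A\min\{T,R\}+s_B\min\{T,S\}$ over all non-negative reals $x_{\kappa\kappa_A\kappa_B}$, $(\kappa,\kappa_A,\kappa_B)\in\{A,B,X\}^3$, summing to one is equal to the maximum of $s_XT+s_AR+s_BS$ over all non-negative reals $x_{\kappa\kappa_A\kappa_B}$ summing to one that additionally satisfy $R\le T$ and $S\le T$.
   Context: For triples $(\kappa,\kappa_A,\kappa_B),(\lambda,\lambda_A,\lambda_B)\in\{A,B,X\}^3$ write $\kappa\kappa_A\kappa_B\to\lambda\lambda_A\lambda_B$ if each of the pairs $(\kappa,\lambda)$, $(\kappa_A,\lambda_A)$, $(\kappa_B,\lambda_B)$ is one of $(A,B),(A,X),(B,X),(X,A),(X,B),(X,X)$, and moreover $(\kappa_B,\lambda_A)\neq(A,B)$. Given reals $x_{\kappa\kappa_A\kappa_B}$, let $T=\sum_{A\kappa_A\kappa_B\to B\lambda_A\lambda_B}x_{A\kappa_A\kappa_B}x_{B\lambda_A\lambda_B}$ (sum over all $\kappa_A,\kappa_B,\lambda_A,\lambda_B$ with $A\kappa_A\kappa_B\to B\lambda_A\lambda_B$), $R=\sum_{\kappa A\kappa_B\to\lambda B\lambda_B}x_{\kappa A\kappa_B}x_{\lambda B\lambda_B}$, $S=\sum_{\kappa\kappa_A A\to\lambda\lambda_A B}x_{\kappa\kappa_A A}x_{\lambda\lambda_A B}$, and $s_\mu=\sum_{\kappa_A,\kappa_B}x_{\mu\kappa_A\kappa_B}$ for $\mu\in\{A,B,X\}$. *)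

From mathcomp Require Import all_boot all_order all_algebra.
From mathcomp Require Import reals.
Set Implicit Arguments. Unset Strict Implicit. Unset Printing Implicit Defensive.
Import Order.TTheory GRing.Theory Num.Theory.
Local Open Scope ring_scope.

Definition lbl := 'I_3.
Definition lA : lbl := @Ordinal 3 0 isT.
Definition lB : lbl := @Ordinal 3 1 isT.
Definition lX : lbl := @Ordinal 3 2 isT.

Definition stepok (k l : lbl) : bool :=
  [|| (k == lA) && (l == lB), (k == lA) && (l == lX), (k == lB) && (l == lX),
      (k == lX) && (l == lA), (k == lX) && (l == lB) | (k == lX) && (l == lX)].

Definition arrow (k kA kB l mA mB : lbl) : bool :=
  [&& stepok k l, stepok kA mA, stepok kB mB & ~~ ((kB == lA) && (mA == lB))].

Section Quantities.
Variable R : realType.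
Variable x : lbl -> lbl -> lbl -> R.

Definition Tq : R :=
  \sum_(kA : lbl) \sum_(kB : lbl) \sum_(lA' : lbl) \sum_(lB' : lbl)
    (if arrow lA kA kB lB lA' lB' then x lA kA kB * x lB lA' lB' else 0).
Definition Rq : R :=
  \sum_(k : lbl) \sum_(kB : lbl) \sum_(l : lbl) \sum_(lB' : lbl)
    (if arrow k lA kB l lB lB' then x k lA kB * x l lB lB' else 0).
Definition Sq : R :=
  \sum_(k : lbl) \sum_(kA : lbl) \sum_(l : lbl) \sum_(lA' : lbl)
    (if arrow k kA lA l lA' lB then x k kA lA * x l lA' lB else 0).
Definition sq (mu : lbl) : R := \sum_(kA : lbl) \sum_(kB : lbl) x mu kA kB.

Definition in_simplex : Prop :=
  (forall k kA kB, 0 <= x k kA kB) /\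
  \sum_(k : lbl) \sum_(kA : lbl) \sum_(kB : lbl) x k kA kB = 1.

Definition Fobj : R :=
  sq lX * Tq + sq lA * Num.min Tq Rq + sq lB * Num.min Tq Sq.
Definition Gobj : R := sq lX * Tq + sq lA * Rq + sq lB * Sq.
End Quantities.

From mathcomp Require Import all_boot all_order all_algebra.
From mathcomp Require Import reals ring.
From mathcomp Require Import classical_sets topology normedtype derive.
Import Order.TTheory GRing.Theory Num.Theory.
Import numFieldNormedType.Exports ArrowAsProduct.
Local Open Scope classical_set_scope.
Local Open Scope ring_scope.

(* On the feasible set {R <= T, S <= T} the two objectives agree and both are continuous
   on the compact simplex, so it suffices to map every x of the simplex to a feasible y
   with F(x) <= G(y).  Multiply the entries x_kab with (a,b) in {AX, BB, BX} by c, those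
   with (a,b) in {AA, XA, XB} by d, and move the removed mass to x_kXX.  This keeps every
   s_mu, and it cannot decrease T since XX is related to every pair in the sum defining T.
   Every term of R contains an entry of the c-group and none of the d-group, and XX occurs
   in neither R nor S; so R(y) is a continuous function of c alone, zero at c = 0 and equal
   to R(x) at c = 1, and the intermediate value theorem gives c with
   R(y) = min{T(x), R(x)} <= T(y).  The same works for S with d. *)

Lemma lblP (k : lbl) : [\/ k = lA, k = lB | k = lX].
Proof.
case: k => -[|[|[|//]]] k_lt3; [constructor 1|constructor 2|constructor 3];
  exact: val_inj.
Qed.

Lemma big_lbl (V : nmodType) (f : lbl -> V) : \sum_(k : lbl) f k = f lA + f lB + f lX.
Proof.
rewrite /lbl !big_ord_recl big_ord0 addr0 addrA.
by congr (f _ + f _ + f _); apply: val_inj.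
Qed.

Lemma ler_sum_term {R : numDomainType} {I : finType} {F : I -> R} (i : I) :
  (forall j, 0 <= F j) -> F i <= \sum_j F j.
Proof. by move=> F_ge0; rewrite (bigD1 i) //= lerDl sumr_ge0. Qed.

Lemma sum_pair (V : nmodType) (I J : finType) (F : I * J -> V) :
  \sum_p F p = \sum_i \sum_j F (i, j).
Proof. by rewrite pair_big; apply: eq_bigr => -[]. Qed.

Lemma exchange_big2 (V : nmodType) (I J : finType) (F : I -> I -> J -> J -> V) :
  \sum_i \sum_i' \sum_j \sum_j' F i i' j j' = \sum_j \sum_j' \sum_i \sum_i' F i i' j j'.
Proof.
rewrite pair_big [RHS]pair_big /=.
under eq_bigr do rewrite pair_big /=.
under [RHS]eq_bigr do rewrite pair_big /=.
exact: exchange_big.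
Qed.

Lemma bilinear_le_stochastic {R : numDomainType} {I : finType} {t : rel I}
    {M : I -> I -> R} {u v : I -> R} :
  (forall p q, 0 <= M p q) -> (forall p, \sum_q M p q = 1) ->
  (forall p p' q q', t p p' -> M p q != 0 -> M p' q' != 0 -> t q q') ->
  (forall p, 0 <= u p) -> (forall p, 0 <= v p) ->
  \sum_p \sum_p' (if t p p' then u p * v p' else 0) <=
  \sum_q \sum_q' (if t q q' then (\sum_p u p * M p q) * (\sum_p' v p' * M p' q') else 0).
Proof.
move=> M_ge0 M_sum1 M_rel u_ge0 v_ge0.
pose w p p' q q' := u p * M p q * (v p' * M p' q').
have mass_preserved (f : I -> R) p : \sum_q f p * M p q = f p.
  by rewrite -mulr_sumr M_sum1 mulr1.
have -> : \sum_p \sum_p' (if t p p' then u p * v p' else 0) =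
    \sum_p \sum_p' \sum_q \sum_q' (if t p p' then w p p' q q' else 0).
  apply: eq_bigr => p _; apply: eq_bigr => p' _.
  case: ifP => _; last by rewrite big1 // => q _; rewrite big1.
  by rewrite -{1}(mass_preserved u p) -(mass_preserved v p') big_distrlr.
have -> : \sum_q \sum_q' (if t q q' then (\sum_p u p * M p q) * (\sum_p' v p' * M p' q')
                          else 0) =
    \sum_q \sum_q' \sum_p \sum_p' (if t q q' then w p p' q q' else 0).
  apply: eq_bigr => q _; apply: eq_bigr => q' _.
  case: ifP => _; last by rewrite big1 // => p _; rewrite big1.
  exact: big_distrlr.
rewrite exchange_big2; apply: ler_sum => q _; apply: ler_sum => q' _.
apply: ler_sum => p _; apply: ler_sum => p' _.
have [tpp|_] := boolP (t p p'); last by case: ifP => // _; rewrite /w !mulr_ge0.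
case: ifP => // tqq; rewrite /w.
have [->|Mq] := eqVneq (M p q) 0; first by rewrite mulr0 mul0r.
have [->|Mq'] := eqVneq (M p' q') 0; first by rewrite !mulr0.
by rewrite (M_rel _ _ _ _ tpp Mq Mq') in tqq.
Qed.

Lemma IVT_min {R : realType} {f : R -> R} {tau : R} :
  continuous f -> f 0 = 0 -> 0 <= tau ->
  exists2 c, 0 <= c <= 1 & f c = Num.min tau (f 1).
Proof.
move=> f_cont f0 tau_ge0.
have [f1_le|tau_lt] := leP (f 1) tau; first by exists 1; rewrite ?ler01 ?lexx // min_r.
have f_cont01 : {within `[0, 1], continuous f} by exact: continuous_subspaceT.
have tau_between : Num.min (f 0) (f 1) <= tau <= Num.max (f 0) (f 1).
  by rewrite f0 ge_min le_max tau_ge0 (ltW tau_lt) orbT.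
have [c] := IVT ler01 f_cont01 tau_between.
by rewrite in_itv /= => c01 fc; exists c.
Qed.

Section Objectives.
Context {R : realType}.
Local Notation fam := (lbl -> lbl -> lbl -> R).
Implicit Types x y : fam.

Lemma Tq_ge0 x : (forall k a b, 0 <= x k a b) -> 0 <= Tq x.
Proof.
move=> x_ge0; rewrite /Tq; do 4 (apply: sumr_ge0 => ? _).
by case: ifP => // _; apply: mulr_ge0.
Qed.

Lemma sq_ge0 x mu : (forall k a b, 0 <= x k a b) -> 0 <= sq x mu.
Proof. by move=> x_ge0; rewrite /sq; do 2 (apply: sumr_ge0 => ? _). Qed.

Lemma Gobj_eq_Fobj x : Rq x <= Tq x -> Sq x <= Tq x -> Gobj x = Fobj x.
Proof. by move=> RT ST; rewrite /Gobj /Fobj !min_r. Qed.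

Section Continuity.
Variables (T : topologicalType) (y : T -> fam).
Hypothesis y_cont : forall k a b, continuous (fun t => y t k a b).

Let continuous_sum (F : lbl -> T -> R) :
  (forall i, continuous (F i)) -> continuous (fun t => \sum_i F i t).
Proof.
by move=> F_cont; apply: continuous_big => [|i _]; [exact: add_continuous | exact: F_cont].
Qed.

Let continuous_if_mul (b : bool) k a c k' a' c' :
  continuous (fun t => if b then y t k a c * y t k' a' c' else 0).
Proof.
case: b; last exact: cst_continuous.
by move=> t; exact (continuousM (y_cont k a c t) (y_cont k' a' c' t)).
Qed.

Lemma continuous_Tq : continuous (fun t => Tq (y t)).
Proof. by rewrite /Tq; do 4 (apply: continuous_sum => ?); exact: continuous_if_mul. Qed.

Lemma continuous_Rq : continuous (fun t => Rq (y t)).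
Proof. by rewrite /Rq; do 4 (apply: continuous_sum => ?); exact: continuous_if_mul. Qed.

Lemma continuous_Sq : continuous (fun t => Sq (y t)).
Proof. by rewrite /Sq; do 4 (apply: continuous_sum => ?); exact: continuous_if_mul. Qed.

Lemma continuous_sq mu : continuous (fun t => sq (y t) mu).
Proof. by rewrite /sq; do 2 (apply: continuous_sum => ?); exact: y_cont. Qed.

Lemma continuous_mass : continuous (fun t => \sum_k sq (y t) k).
Proof. by apply: continuous_sum => k; exact: continuous_sq. Qed.

Lemma continuous_Fobj : continuous (fun t => Fobj (y t)).
Proof.
move=> t; rewrite /Fobj.
have cT := continuous_Tq t; have cR := continuous_Rq t; have cS := continuous_Sq t.
have cA := continuous_sq lA t; have cB := continuous_sq lB t; have cX := continuous_sq lX t.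
exact (continuousD (continuousD (continuousM cX cT)
  (continuousM cA (continuous_min cT cR))) (continuousM cB (continuous_min cT cS))).
Qed.

End Continuity.

Definition pXX : lbl * lbl := (lX, lX).

(* With A, B, X numbered 0, 1, 2: weight c on AX, BB, BX and weight d on AA, XA, XB. *)
Definition weight (c d : R) (p : lbl * lbl) : R :=
  match val p.1, val p.2 with
  | 0%N, 2%N | 1%N, 1%N | 1%N, 2%N => c
  | 0%N, 0%N | 2%N, 0%N | 2%N, 1%N => d
  | _, _ => 1
  end.

Definition rescale (c d : R) x k a b : R := weight c d (a, b) * x k a b.

Section Transport.
Variables (c d : R).
Hypotheses (c01 : 0 <= c <= 1) (d01 : 0 <= d <= 1).

Definition kernel (p q : lbl * lbl) : R :=
  (if q == p then weight c d p else 0) + (if q == pXX then 1 - weight c d p else 0).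

Definition transport x k a b : R := \sum_p x k p.1 p.2 * kernel p (a, b).

Lemma weight01 p : 0 <= weight c d p <= 1.
Proof.
rewrite /weight; case: (val p.1) => [|[|[|?]]]; case: (val p.2) => [|[|[|?]]];
  by rewrite ?ler01 ?lexx.
Qed.

Lemma kernel_ge0 p q : 0 <= kernel p q.
Proof.
have /andP[w_ge0 w_le1] := weight01 p.
by rewrite /kernel addr_ge0 //; case: ifP; rewrite ?subr_ge0.
Qed.

Lemma sum_kernel p : \sum_q kernel p q = 1.
Proof. by rewrite big_split /= -!big_mkcond /= !big_pred1_eq addrC subrK. Qed.

Lemma kernel_neq0 p q : kernel p q != 0 -> q = p \/ q = pXX.
Proof.
rewrite /kernel; have [->|_] := eqVneq q p; first by left.
by have [->|_] := eqVneq q pXX; [right | rewrite addr0 eqxx].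
Qed.

Lemma transport_rescale x k a b : (a, b) != pXX -> transport x k a b = rescale c d x k a b.
Proof.
rewrite /transport sum_pair !big_lbl /kernel /rescale.
by case: (lblP a) => ->; case: (lblP b) => -> //= _; rewrite /weight /=; ring.
Qed.

Lemma sq_transport x mu : sq (transport x) mu = sq x mu.
Proof. by rewrite /sq /transport !big_lbl !sum_pair !big_lbl /kernel /weight /=; ring. Qed.

Lemma transport_simplex x : in_simplex x -> in_simplex (transport x).
Proof.
case=> x_ge0 x_mass; split.
  by move=> k a b; apply: sumr_ge0 => p _; rewrite mulr_ge0 ?kernel_ge0.
by rewrite -x_mass; apply: eq_bigr => k _; exact: sq_transport.
Qed.

Definition Tstep (p p' : lbl * lbl) : bool := arrow lA p.1 p.2 lB p'.1 p'.2.

Lemma Tq_Tstep x :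
  Tq x = \sum_p \sum_p' (if Tstep p p' then x lA p.1 p.2 * x lB p'.1 p'.2 else 0).
Proof.
rewrite /Tq sum_pair; apply: eq_bigr => a _; apply: eq_bigr => b _.
by rewrite [RHS]sum_pair.
Qed.

Lemma Tstep_kernel p p' q q' :
  Tstep p p' -> kernel p q != 0 -> kernel p' q' != 0 -> Tstep q q'.
Proof.
have XX_l r : Tstep pXX r by case: r => a b; case: (lblP a) => ->; case: (lblP b) => ->.
have XX_r r : Tstep r pXX by case: r => a b; case: (lblP a) => ->; case: (lblP b) => ->.
by move=> ? /kernel_neq0[->|->] /kernel_neq0[->|->].
Qed.

Lemma Tq_transport x : (forall k a b, 0 <= x k a b) -> Tq x <= Tq (transport x).
Proof.
move=> x_ge0; rewrite !Tq_Tstep.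
exact: bilinear_le_stochastic kernel_ge0 sum_kernel Tstep_kernel _ _.
Qed.

Lemma Rq_transport x : Rq (transport x) = Rq (rescale c 1 x).
Proof.
rewrite /Rq; under eq_bigr do under eq_bigr do under eq_bigr do under eq_bigr
  do rewrite !transport_rescale //.
by rewrite !big_lbl /rescale /weight /=; ring.
Qed.

Lemma Sq_transport x : Sq (transport x) = Sq (rescale 1 d x).
Proof.
rewrite /Sq; under eq_bigr do under eq_bigr do under eq_bigr do under eq_bigr
  do rewrite !transport_rescale ?xpair_eqE ?andbF //.
by rewrite !big_lbl /rescale /weight /=; ring.
Qed.

End Transport.

Lemma Rq_rescale0 x : Rq (rescale 0 1 x) = 0.
Proof. by rewrite /Rq !big_lbl /rescale /weight /=; ring. Qed.

Lemma Rq_rescale1 x : Rq (rescale 1 1 x) = Rq x.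
Proof. by rewrite /Rq !big_lbl /rescale /weight /=; ring. Qed.

Lemma Sq_rescale0 x : Sq (rescale 1 0 x) = 0.
Proof. by rewrite /Sq !big_lbl /rescale /weight /=; ring. Qed.

Lemma Sq_rescale1 x : Sq (rescale 1 1 x) = Sq x.
Proof. by rewrite /Sq !big_lbl /rescale /weight /=; ring. Qed.

Lemma continuous_rescale (f g : R -> R) x k a b :
  continuous f -> continuous g -> continuous (fun t => rescale (f t) (g t) x k a b).
Proof.
move=> f_cont g_cont t; rewrite /rescale /weight /=.
have scale_cont (h : R -> R) (z : R) : continuous h -> {for t, continuous (fun t => h t * z)}.
  by move=> h_cont; exact (continuousM (h_cont t) (@cst_continuous _ _ z t)).
by case: (val a) => [|[|[|?]]]; case: (val b) => [|[|[|?]]];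
  apply: scale_cont => //; exact: cst_continuous.
Qed.

Lemma exists_feasible_Gobj_ge x : in_simplex x ->
  exists y, [/\ in_simplex y, Rq y <= Tq y, Sq y <= Tq y & Fobj x <= Gobj y].
Proof.
move=> x_simplex; have [x_ge0 _] := x_simplex.
have T_ge0 := Tq_ge0 x x_ge0.
have id_cont : continuous (fun t : R => t) by move=> t; exact: cvg_id.
have [c c01 Rc] : exists2 c, 0 <= c <= 1 & Rq (rescale c 1 x) = Num.min (Tq x) (Rq x).
  rewrite -[in Num.min _ _]Rq_rescale1; apply: IVT_min (Rq_rescale0 x) T_ge0.
  by apply: continuous_Rq => k a b; apply: continuous_rescale => //; exact: cst_continuous.
have [d d01 Sd] : exists2 d, 0 <= d <= 1 & Sq (rescale 1 d x) = Num.min (Tq x) (Sq x).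
  rewrite -[in Num.min _ _]Sq_rescale1; apply: IVT_min (Sq_rescale0 x) T_ge0.
  by apply: continuous_Sq => k a b; apply: continuous_rescale => //; exact: cst_continuous.
have T_le : Tq x <= Tq (transport c d x) by exact: Tq_transport.
exists (transport c d x); split.
- exact: transport_simplex.
- by rewrite Rq_transport Rc (le_trans _ T_le) // ge_min lexx.
- by rewrite Sq_transport Sd (le_trans _ T_le) // ge_min lexx.
- rewrite /Fobj /Gobj Rq_transport Sq_transport Rc Sd !sq_transport.
  by rewrite lerD2r lerD2r ler_wpM2l // sq_ge0.
Qed.

Lemma continuous_coord k a b : continuous (fun x : fam => x k a b).
Proof.
move=> x.
apply: (@continuous_comp _ _ _ (fun x : fam => x k a) (fun g => g b));
  last exact: proj_continuous.
apply: (@continuous_comp _ _ _ (fun x : fam => x k) (fun g => g a));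
  last exact: proj_continuous.
exact: proj_continuous.
Qed.

Lemma unit_cube_compact : compact [set x : fam | forall k a b, `[0, 1]%classic (x k a b)].
Proof.
have cube1 := @tychonoff lbl (fun=> R) _ (fun=> @segment_compact R 0 1).
have cube2 := @tychonoff lbl (fun=> lbl -> R) _ (fun=> cube1).
exact: (@tychonoff lbl (fun=> lbl -> lbl -> R) _ (fun=> cube2)).
Qed.

Lemma simplex_compact : compact [set x : fam | in_simplex x].
Proof.
have -> : [set x : fam | in_simplex x] =
    [set x | forall k a b, `[0, 1]%classic (x k a b)] `&` [set x | \sum_k sq x k = 1].
  apply/seteqP; split=> x /=; last first.
    by case=> x01 x_mass; split=> // k a b; have /andP[] := x01 k a b.
  case=> x_ge0 x_mass; split=> // k a b; rewrite in_itv /= x_ge0 -x_mass /=.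
  apply: le_trans (ler_sum_term k (fun mu => sq_ge0 x mu x_ge0)).
  apply: le_trans (ler_sum_term a (fun a' => sumr_ge0 _ (fun b' _ => x_ge0 k a' b'))).
  exact: ler_sum_term.
apply: compact_closedI; first exact: unit_cube_compact.
have mass_cont := @continuous_mass fam id continuous_coord.
exact (proj1 (continuous_closedP _) mass_cont _ (@closed_eq R 1)).
Qed.

Lemma Fobj_attains_max :
  exists2 xm, in_simplex xm & forall x, in_simplex x -> Fobj x <= Fobj xm.
Proof.
pose delta_XXX : fam := fun k a b => if (k, a, b) == (lX, lX, lX) then 1 else 0.
have delta_simplex : in_simplex delta_XXX.
  split; first by move=> k a b; rewrite /delta_XXX; case: ifP; rewrite ?ler01.
  by rewrite /sq !big_lbl /delta_XXX /=; ring.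
have Fobj_cont : {within [set x | in_simplex x], continuous (@Fobj R)}.
  exact/continuous_subspaceT/(@continuous_Fobj fam id continuous_coord).
have [xm] := compact_EVT_max (ex_intro _ _ delta_simplex) simplex_compact Fobj_cont.
rewrite inE => xm_simplex xm_max; exists xm => // x x_simplex.
by apply: xm_max; rewrite inE.
Qed.

End Objectives.

Theorem lemma6p2 (R : realType) :
  exists M : R,
    ((exists x : lbl -> lbl -> lbl -> R, in_simplex x /\ Fobj x = M) /\
     (forall x : lbl -> lbl -> lbl -> R, in_simplex x -> Fobj x <= M)) /\
    ((exists x : lbl -> lbl -> lbl -> R,
        in_simplex x /\ Rq x <= Tq x /\ Sq x <= Tq x /\ Gobj x = M) /\
     (forall x : lbl -> lbl -> lbl -> R,
        in_simplex x -> Rq x <= Tq x -> Sq x <= Tq x -> Gobj x <= M)).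
Proof.
have [xm xm_simplex xm_max] := @Fobj_attains_max R.
have [y [y_simplex yR yS Fxm_le]] := exists_feasible_Gobj_ge _ xm_simplex.
exists (Fobj xm); split; split.
- by exists xm.
- exact: xm_max.
- exists y; do !split => //.
  by apply: le_anti; rewrite Fxm_le andbT Gobj_eq_Fobj ?xm_max.
- by move=> x x_simplex xR xS; rewrite Gobj_eq_Fobj ?xm_max.
Qed.
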